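(* Let $K$ be a field, $X$ a finite connected poset, $\varphi$ an elementary Lie automorphism of $I(X,K)$, $\theta=\theta_\varphi$, $\sigma=\sigma_\varphi$, and $x<y<z$ in $X$. Then either $\theta(e_{xz})=\theta(e_{xy})\theta(e_{yz})$, in which case $\sigma(x,z)=\sigma(x,y)\sigma(y,z)$, or $\theta(e_{xz})=\theta(e_{yz})\theta(e_{xy})$, in which case $\sigma(x,z)=-\sigma(x,y)\sigma(y,z)$.
   Context: $I(X,K)$ is the incidence algebra: functions $f:X\times X\to K$ with $f(x,y)=0$ unless $x\le y$, product $(fg)(x,y)=\sum_{x\le t\le y}f(x,t)g(t,y)$; $e_{xy}$ ($x\le y$) is the basis element equal to $1$ at $(x,y)$ and $0$ elsewhere. $B=\{e_{xy}:x<y\}$, $X^2_<=\{(x,y):x<y\}$. A Lie automorphism is a bijective linear map preserving $[f,g]=fg-gf$. With $l(\lfloor x,y\rfloor)$ the maximal length of a chain in $\{z:x\le z\le y\}$ and $L_i=\mathrm{span}_K\{e_{xy}:l(\lfloor x,y\rfloor)=i\}$, for a Lie automorphism $\psi$ let $\widetilde\psi$ send $e_{xy}\in L_i$ to the $L_i$-component of $\psi(e_{xy})$. A Lie automorphism $\varphi$ is elementary if $\varphi=\widetilde\psi$ for some Lie automorphism $\psi$ (equivalently $\varphi(L_i)\subseteq L_i$ for all $i$). For elementary $\varphi$, for each $x<y$ there are a unique $e_{uv}\in B$ and a unique $k\in K^*$ with $\varphi(e_{xy})=k e_{uv}$; set $\theta_\varphi(e_{xy})=e_{uv}$ and $\sigma_\varphi(x,y)=k$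 (then $\theta_\varphi:B\to B$ is a bijection). Connected means any two elements are joined by a sequence in which consecutive elements are in a covering relation. *)

From HB Require Import structures.
From mathcomp Require Import all_boot all_order all_algebra.
Set Implicit Arguments. Unset Strict Implicit. Unset Printing Implicit Defensive.
Import Order.TTheory GRing.Theory.
Local Open Scope ring_scope.

Section Incidence.
Context {d : Order.disp_t} (X : finPOrderType d) (K : fieldType).

(* Ambient space of functions X x X -> K; the incidence algebra I(X,K) is the
   subspace of those f with f(x,y) = 0 unless x <= y. *)
Local Notation inc := {ffun X * X -> K}.

Definition in_I (f : inc) : bool :=
  [forall p : X * X, ~~ (p.1 <= p.2)%O ==> (f p == 0)].

Definition imul (f g : inc) : inc :=
  [ffun p : X * X => \sum_(t : X | (p.1 <= t)%O && (t <= p.2)%O)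
                       f (p.1, t) * g (t, p.2)].

Definition lie (f g : inc) : inc := imul f g - imul g f.

Definition iscale (a : K) (f : inc) : inc := [ffun p => a * f p].

Definition ebas (x y : X) : inc := [ffun p => if p == (x, y) then 1 else 0].

Definition ilen (x y : X) : nat :=
  \max_(C : {set X} | [forall a in C, (x <= a)%O && (a <= y)%O] &&
                      [forall a in C, forall b in C, (a >=< b)%O]) #|C|.-1.

(* f belongs to L_i = span{ e_xy : l(|_x,y_|) = i } *)
Definition inL (i : nat) (f : inc) : bool :=
  [forall p : X * X, (f p != 0) ==> ((p.1 <= p.2)%O && (ilen p.1 p.2 == i))].

Definition lie_aut (phi : inc -> inc) : Prop :=
  [/\ (forall f, in_I f -> in_I (phi f)),
      (forall (a : K) f g, in_I f -> in_I g -> phi (iscale a f + g) = iscale a (phi f) + phi g),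
      (forall f g, in_I f -> in_I g -> phi f = phi g -> f = g),
      (forall g, in_I g -> exists2 f, in_I f & phi f = g) &
      (forall f g, in_I f -> in_I g -> phi (lie f g) = lie (phi f) (phi g))].

Definition elementary (phi : inc -> inc) : Prop :=
  lie_aut phi /\ (forall i f, inL i f -> inL i (phi f)).

(* theta_phi(e_xy) = e_uv where phi(e_xy) = k e_uv, u < v, k <> 0;
   represented by the pair (u,v) *)
Definition theta (phi : inc -> inc) (x y : X) : X * X :=
  odflt (x, y) [pick p : X * X | [&& (p.1 < p.2)%O, phi (ebas x y) p != 0 &
                     phi (ebas x y) == iscale (phi (ebas x y) p) (ebas p.1 p.2)]].

Definition sigma (phi : inc -> inc) (x y : X) : K :=
  phi (ebas x y) (theta phi x y).

Definition covers (a b : X) : bool :=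
  (a < b)%O && [forall c : X, ~~ ((a < c)%O && (c < b)%O)].

Definition connected_poset : Prop :=
  forall a b : X, exists s : seq X,
    path (fun u v => covers u v || covers v u) a s && (last a s == b).

End Incidence.
Arguments ebas {d X} K x y.

From Pilot Require Import Defs.
From HB Require Import structures.
From mathcomp Require Import all_boot all_order all_algebra.
Import Order.TTheory GRing.Theory.
Set Implicit Arguments. Unset Strict Implicit. Unset Printing Implicit Defensive.
Local Open Scope ring_scope.

(* Since phi preserves every L_i and l(|_a,b_|) = 0 exactly when a = b, phi maps
   diagonal elements to diagonal ones and commutes with taking the diagonal part;
   with surjectivity, every e_uu is then phi(D) for a diagonal D.  As [D, e_xy] is
   a multiple of e_xy, phi(e_xy) is an eigenvector of ad e_uu, which multiplies
   e_pq by [p = u] - [q = u].  Hence a pair in the support of phi(e_xy) meets u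
   exactly once iff every other one does; taking for u the two endpoints of one
   such pair shows the support is that pair: phi(e_xy) = sigma(x,y) e_theta(x,y).
   Applying phi to e_xz = [e_xy, e_yz] gives
   sigma(x,z) e_theta(x,z) = sigma(x,y) sigma(y,z) (d_bc e_ad - d_da e_cb)
   with (a,b) = theta(x,y), (c,d) = theta(y,z), and at most one term survives. *)

Lemma pair_eq_of_endpoints {d} (X : porderType d) (p q : X * X) :
  (p.1 < p.2)%O -> (q.1 <= q.2)%O ->
  (q.1 == p.1) != (q.2 == p.1) -> (q.1 == p.2) != (q.2 == p.2) -> q = p.
Proof.
case: p q => p1 p2 [q1 q2] /= p_lt.
have [-> | _] := eqVneq q1 p1.
  by rewrite (lt_eqF p_lt) => _ _; case: (eqVneq q2 p2) => [-> | _].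
have [-> q_le _ | //] := eqVneq q2 p1; rewrite (lt_eqF p_lt).
case: (eqVneq q1 p2) q_le => [-> q_le _ | //].
by move: (lt_le_trans p_lt q_le); rewrite ltxx.
Qed.

Section IncidenceAlgebra.
Context {d : Order.disp_t} (X : finPOrderType d) (K : fieldType).
Local Notation inc := {ffun X * X -> K}.
Local Notation e := (ebas K).
Local Notation in_I := (@in_I _ X K).
Local Notation inL := (@inL _ X K).
Local Notation imul := (@imul _ X K).
Local Notation lie := (@lie _ X K).
Local Notation iscale := (@iscale _ X K).
Local Notation ilen := (@ilen _ X).

Lemma in_IP (f : inc) : reflect (forall p, ~~ (p.1 <= p.2)%O -> f p = 0) (in_I f).
Proof.
apply: (iffP forallP) => [f_I p p_nle | f_I p]; first exact/eqP/(implyP (f_I p)).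
by apply/implyP => /f_I ->.
Qed.

Fact in_I_zmod_closed : zmod_closed in_I.
Proof.
split; first by apply/in_IP => p _; rewrite ffunE.
move=> f g /in_IP f_I /in_IP g_I; apply/in_IP => p p_nle.
by rewrite !ffunE f_I // g_I // subr0.
Qed.

HB.instance Definition _ := GRing.isZmodClosed.Build inc in_I in_I_zmod_closed.

Lemma in_I0 : in_I 0.
Proof. exact: rpred0. Qed.

Lemma in_IZ a (f : inc) : in_I f -> in_I (iscale a f).
Proof. by move=> /in_IP f_I; apply/in_IP => p p_nle; rewrite ffunE f_I ?mulr0. Qed.

Lemma in_I_ebas a b : (a <= b)%O -> in_I (e a b).
Proof.
move=> ab; apply/in_IP => p; rewrite ffunE; case: eqP => [-> /=|//].
by rewrite ab.
Qed.

Lemma iscale1 (f : inc) : iscale 1 f = f.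
Proof. by apply/ffunP => p; rewrite ffunE mul1r. Qed.

Lemma iscaler0 a : iscale a 0 = 0.
Proof. by apply/ffunP => p; rewrite !ffunE mulr0. Qed.

Lemma iscaleN a (f : inc) : iscale a (- f) = iscale (- a) f.
Proof. by apply/ffunP => p; rewrite !ffunE mulrN mulNr. Qed.

Lemma iscaleBr a (f g : inc) : iscale a (f - g) = iscale a f - iscale a g.
Proof. by apply/ffunP => p; rewrite !ffunE mulrBr. Qed.

Lemma iscale_ebas_eq0 k u v : (iscale k (e u v) == 0) = (k == 0).
Proof.
apply/eqP/eqP => [/ffunP /(_ (u, v))|->]; first by rewrite !ffunE eqxx mulr1.
by apply/ffunP => p; rewrite !ffunE mul0r.
Qed.

Lemma iscale_ebas_inj k k' u v a b : k != 0 ->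
  iscale k (e u v) = iscale k' (e a b) -> (u, v) = (a, b) /\ k = k'.
Proof.
move=> k0 /ffunP /(_ (u, v)); rewrite !ffunE eqxx mulr1.
by case: eqP => [-> | _ E]; [rewrite mulr1 | move: k0; rewrite E mulr0 eqxx].
Qed.

Lemma in_I_expansion (f : inc) : in_I f ->
  f = \sum_(p | (p.1 <= p.2)%O) iscale (f p) (e p.1 p.2).
Proof.
move=> /in_IP f_I; apply/ffunP => q; rewrite sum_ffunE.
have [le_q | nle_q] := boolP (q.1 <= q.2)%O; last first.
  rewrite f_I // big1 // => p le_p; rewrite !ffunE.
  by case: eqP => [Eq|_]; [move: nle_q; rewrite Eq le_p | rewrite mulr0].
rewrite (bigD1 q) //= big1 => [|p /andP[_ /negbTE pq]].
  by rewrite !ffunE -surjective_pairing eqxx mulr1 addr0.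
by rewrite !ffunE -surjective_pairing eq_sym pq mulr0.
Qed.

Lemma ilen_refl a : ilen a a = 0%N.
Proof.
apply/eqP; rewrite -leqn0; apply/bigmax_leqP => C /andP[/forall_inP inC _].
suff : (#|C| <= 1)%N by case: #|C| => [|[]].
rewrite -(cards1 a); apply/subset_leq_card/subsetP => c /inC /andP[ac ca].
by rewrite in_set1 eq_le ca ac.
Qed.

Lemma ilen_gt0 a b : (a < b)%O -> (0 < ilen a b)%N.
Proof.
move=> ab; apply: (@leq_trans #|[set a; b]|.-1); first by rewrite cards2 (lt_eqF ab).
apply: (leq_bigmax_cond [set a; b]); apply/andP; split.
  by apply/forall_inP => c; rewrite !inE => /orP[]/eqP->; rewrite lexx ltW.
have ab' : (a >=< b)%O := le_comparable (ltW ab).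
apply/forall_inP => c; rewrite !inE => /orP[]/eqP->; apply/forall_inP => c';
  by rewrite !inE => /orP[]/eqP->; rewrite ?comparablexx // comparable_sym.
Qed.

Lemma ilen_eq0 a b : (a <= b)%O -> (ilen a b == 0%N) = (a == b).
Proof.
rewrite le_eqVlt => /orP[/eqP-> | ab]; first by rewrite ilen_refl !eqxx.
by rewrite (lt_eqF ab); apply/negbTE; rewrite -lt0n ilen_gt0.
Qed.

Lemma inLP i (f : inc) :
  reflect (forall p, f p != 0 -> (p.1 <= p.2)%O && (ilen p.1 p.2 == i)) (inL i f).
Proof. by apply: (iffP forallP) => H p; apply/implyP; apply: H. Qed.

Lemma inL_ebas a b : (a <= b)%O -> inL (ilen a b) (e a b).
Proof.
move=> ab; apply/inLP => p; rewrite ffunE.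
by case: (eqVneq p (a, b)) => [-> _ | _]; rewrite /= ?ab ?eqxx.
Qed.

Lemma imul_ebasr (f : inc) a b q : (a <= b)%O ->
  imul f (e a b) q = if (q.2 == b) && (q.1 <= a)%O then f (q.1, a) else 0.
Proof.
move=> ab; rewrite ffunE big_mkcond (bigD1 a) //= big1 => [|t /negbTE ta]; last first.
  by rewrite ffunE xpair_eqE ta mulr0; case: ifP.
rewrite ffunE xpair_eqE eqxx addr0 /=.
by case: (eqVneq q.2 b) => [->|_]; rewrite ?ab ?andbT ?mulr1 ?mulr0 //; case: ifP.
Qed.

Lemma imul_ebasl (g : inc) a b q : (a <= b)%O ->
  imul (e a b) g q = if (q.1 == a) && (b <= q.2)%O then g (b, q.2) else 0.
Proof.
move=> ab; rewrite ffunE big_mkcond (bigD1 b) //= big1 => [|t /negbTE tb]; last first.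
  by rewrite ffunE xpair_eqE tb andbF mul0r; case: ifP.
rewrite ffunE xpair_eqE eqxx andbT addr0 /=.
by case: (eqVneq q.1 a) => [->|_]; rewrite ?ab ?mul1r ?mul0r //; case: ifP.
Qed.

Lemma imul_ebas a b c d' : (a <= b)%O -> (c <= d')%O ->
  imul (e a b) (e c d') = if b == c then e a d' else 0.
Proof.
move=> ab cd; apply/ffunP => q; rewrite imul_ebasl //.
case: (eqVneq b c) cd => [<- bd | bc _]; rewrite !ffunE xpair_eqE; last first.
  by rewrite eq_sym (negbTE bc); case: ifP.
rewrite eqxx; case: q => q1 q2 /=; rewrite xpair_eqE.
by case: (q1 == a) => //=; case: (eqVneq q2 d') => [->|_]; rewrite ?bd //; case: ifP.
Qed.

Lemma lieE (f g : inc) q : lie f g q = imul f g q - imul g f q.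
Proof. by rewrite /Defs.lie !ffunE. Qed.

Lemma lie_scale a b (f g : inc) :
  lie (iscale a f) (iscale b g) = iscale (a * b) (lie f g).
Proof.
have imul_scale (f' g' : inc) a' b' :
    imul (iscale a' f') (iscale b' g') = iscale (a' * b') (imul f' g').
  by apply/ffunP => q; rewrite !ffunE mulr_sumr; apply: eq_bigr => t _; rewrite !ffunE mulrACA.
by rewrite /Defs.lie !imul_scale mulrC iscaleBr.
Qed.

Lemma lie_ebas a b c d' : (a <= b)%O -> (c <= d')%O ->
  lie (e a b) (e c d') = (if b == c then e a d' else 0) - (if d' == a then e c b else 0).
Proof. by move=> ab cd; rewrite /Defs.lie !imul_ebas. Qed.

Lemma lie_ebas_chain x y z : (x < y)%O -> (y < z)%O -> lie (e x y) (e y z) = e x z.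
Proof.
by move=> xy yz; rewrite lie_ebas ?ltW // eqxx (gt_eqF (lt_trans xy yz)) subr0.
Qed.

Lemma lie_ebas_refl u (c : inc) q : in_I c ->
  lie (e u u) c q = ((q.1 == u)%:R - (q.2 == u)%:R) * c q.
Proof.
move=> /in_IP c_I; rewrite lieE imul_ebasl // imul_ebasr // mulrBl.
congr (_ - _).
  case: (eqVneq q.1 u) => [<-|_] /=; rewrite ?mul0r // mul1r -surjective_pairing.
  by case: ifP => // /negbT /c_I ->.
case: (eqVneq q.2 u) => [<-|_] /=; rewrite ?mul0r // mul1r -surjective_pairing.
by case: ifP => // /negbT /c_I ->.
Qed.

Definition diagonal (f : inc) : Prop := forall p, p.1 != p.2 -> f p = 0.

Lemma lie_diagonal_ebas (f : inc) x y : diagonal f -> (x <= y)%O ->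
  lie f (e x y) = iscale (f (x, x) - f (y, y)) (e x y).
Proof.
move=> f_diag xy; apply/ffunP => -[q1 q2].
rewrite lieE imul_ebasr ?imul_ebasl //= !ffunE xpair_eqE mulrBl.
have [-> | q1x] := eqVneq q1 x; have [-> | q2y] := eqVneq q2 y;
  rewrite /= ?lexx ?mulr1 ?mulr0 ?subr0 ?sub0r //.
  by case: ifP => _; rewrite ?f_diag ?oppr0 // eq_sym.
by case: ifP => _; rewrite ?f_diag.
Qed.

Definition diagpart (f : inc) : inc := [ffun p => if p.1 == p.2 then f p else 0].

Lemma diagpart_diagonal (f : inc) : diagonal (diagpart f).
Proof. by move=> p /negbTE p_off; rewrite ffunE p_off. Qed.

Lemma in_I_diagpart (f : inc) : in_I f -> in_I (diagpart f).
Proof. by move=> /in_IP f_I; apply/in_IP => p /f_I f0; rewrite ffunE f0; case: ifP. Qed.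

Lemma diagpart_ebas_refl u : diagpart (e u u) = e u u.
Proof.
apply/ffunP => p; rewrite !ffunE.
by case: (eqVneq p (u, u)) => [-> | _]; rewrite ?eqxx //; case: ifP.
Qed.

Section ElementaryLieAutomorphism.
Variable phi : inc -> inc.
Hypothesis phi_elem : elementary phi.

Lemma phi_in_I (f : inc) : in_I f -> in_I (phi f).
Proof. by case: phi_elem => -[phiI _ _ _ _] _; exact: phiI. Qed.

Lemma phi_linear a (f g : inc) : in_I f -> in_I g ->
  phi (iscale a f + g) = iscale a (phi f) + phi g.
Proof. by case: phi_elem => -[_ lin _ _ _] _; exact: lin. Qed.

Lemma phi_inj (f g : inc) : in_I f -> in_I g -> phi f = phi g -> f = g.
Proof. by case: phi_elem => -[_ _ inj _ _] _; exact: inj. Qed.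

Lemma phi_surj (g : inc) : in_I g -> exists2 f, in_I f & phi f = g.
Proof. by case: phi_elem => -[_ _ _ surj _] _; exact: surj. Qed.

Lemma phi_lie (f g : inc) : in_I f -> in_I g -> phi (lie f g) = lie (phi f) (phi g).
Proof. by case: phi_elem => -[_ _ _ _ hom] _; exact: hom. Qed.

Lemma phi_inL i (f : inc) : inL i f -> inL i (phi f).
Proof. by case: phi_elem => _; apply. Qed.

Lemma phi0 : phi 0 = 0.
Proof.
have := phi_linear 1 in_I0 in_I0.
by rewrite !iscale1 addr0 => /esym/eqP; rewrite -subr_eq0 addrK => /eqP.
Qed.

Lemma phiZ a (f : inc) : in_I f -> phi (iscale a f) = iscale a (phi f).
Proof. by move=> f_I; rewrite -[iscale a f]addr0 phi_linear ?in_I0 // phi0 addr0. Qed.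

Lemma phi_sum (I : Type) (r : seq I) (P : pred I) (F : I -> inc) :
  (forall i, P i -> in_I (F i)) ->
  phi (\sum_(i <- r | P i) F i) = \sum_(i <- r | P i) phi (F i).
Proof.
move=> F_I; apply: (proj2 (big_ind2 (fun f g => in_I f /\ phi f = g) _ _ _)).
- by split; [apply: in_I0 | apply: phi0].
- move=> f1 g1 f2 g2 [f1_I <-] [f2_I <-]; split; first by apply: rpredD.
  by rewrite -{1}[f1]iscale1 phi_linear // iscale1.
- by move=> i /F_I.
Qed.

Lemma phi_expansion (f : inc) : in_I f ->
  phi f = \sum_(p | (p.1 <= p.2)%O) iscale (f p) (phi (e p.1 p.2)).
Proof.
move=> f_I; rewrite {1}(in_I_expansion f_I) phi_sum => [|p le_p].
  by apply: eq_bigr => p le_p; rewrite phiZ // in_I_ebas.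
exact/in_IZ/in_I_ebas.
Qed.

Lemma phi_ebas_diag a b q : (a <= b)%O -> phi (e a b) q != 0 ->
  (q.1 == q.2) = (a == b).
Proof.
move=> ab /(inLP _ _ (phi_inL (inL_ebas ab))) /andP[le_q /eqP len_q].
by rewrite -(ilen_eq0 ab) -(ilen_eq0 le_q) len_q.
Qed.

Lemma phi_diagpart (f : inc) : in_I f -> phi (diagpart f) = diagpart (phi f).
Proof.
move=> f_I; apply/ffunP => q.
rewrite (phi_expansion (in_I_diagpart f_I)) (phi_expansion f_I) !ffunE !sum_ffunE.
have [q_diag | q_off] := ifPn; [apply: eq_bigr | apply: big1] => p le_p;
  rewrite !ffunE; have [->|nz] := eqVneq (phi (e p.1 p.2) q) 0; rewrite ?mulr0 //.
  by rewrite -(phi_ebas_diag le_p nz) q_diag.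
by rewrite -(phi_ebas_diag le_p nz) (negbTE q_off) mul0r.
Qed.

Lemma diagonal_preimage u : exists f, [/\ in_I f, diagonal f & phi f = e u u].
Proof.
have [f f_I phi_f] := phi_surj (in_I_ebas (lexx u)).
exists (diagpart f); split; first exact: in_I_diagpart.
  exact: diagpart_diagonal.
by rewrite phi_diagpart // phi_f diagpart_ebas_refl.
Qed.

Lemma phi_ebas_supp_lt x y p : (x < y)%O -> phi (e x y) p != 0 -> (p.1 < p.2)%O.
Proof.
move=> xy p_supp; rewrite lt_neqAle (phi_ebas_diag (ltW xy) p_supp) (lt_eqF xy) /=.
apply: contraTT p_supp => nle_p; rewrite negbK; apply/eqP.
by move/in_IP: (phi_in_I (in_I_ebas (ltW xy))); apply.
Qed.

Lemma phi_ebas_eigen x y u : (x <= y)%O ->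
  exists s, lie (e u u) (phi (e x y)) = iscale s (phi (e x y)).
Proof.
move=> xy; have [f [f_I f_diag phi_f]] := diagonal_preimage u.
exists (f (x, x) - f (y, y)).
by rewrite -phi_f -phi_lie ?in_I_ebas // lie_diagonal_ebas // phiZ // in_I_ebas.
Qed.

Lemma phi_ebas_incident x y u p q : (x <= y)%O ->
  phi (e x y) p != 0 -> phi (e x y) q != 0 ->
  (p.1 == u) != (p.2 == u) -> (q.1 == u) != (q.2 == u).
Proof.
move=> xy p_supp q_supp; have [s eigen] := phi_ebas_eigen u xy.
have weight r : phi (e x y) r != 0 -> (r.1 == u)%:R - (r.2 == u)%:R = s.
  move=> r_supp; apply: (mulIf r_supp).
  by rewrite -lie_ebas_refl ?phi_in_I ?in_I_ebas // eigen ffunE.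
have subr_nat_eq0 (b c : bool) : ((b%:R - c%:R : K) == 0) = (b == c).
  by case: b; case: c; rewrite ?subrr ?subr0 ?sub0r ?oppr_eq0 ?oner_eq0 ?eqxx.
by rewrite -!subr_nat_eq0 !weight.
Qed.

Lemma phi_ebas_support x y p q : (x < y)%O ->
  phi (e x y) p != 0 -> phi (e x y) q != 0 -> q = p.
Proof.
move=> xy p_supp q_supp; have p_lt := phi_ebas_supp_lt xy p_supp.
have meets u : (p.1 == u) != (p.2 == u) -> (q.1 == u) != (q.2 == u).
  exact: phi_ebas_incident (ltW xy) p_supp q_supp.
apply: (pair_eq_of_endpoints p_lt (ltW (phi_ebas_supp_lt xy q_supp))); apply: meets.
  by rewrite eqxx (gt_eqF p_lt).
by rewrite eqxx (lt_eqF p_lt).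
Qed.

Lemma phi_ebas_theta x y : (x < y)%O ->
  [/\ ((theta phi x y).1 < (theta phi x y).2)%O, sigma phi x y != 0 &
      phi (e x y) = iscale (sigma phi x y) (e (theta phi x y).1 (theta phi x y).2)].
Proof.
move=> xy; have exy_I := in_I_ebas (ltW xy).
have [p p_supp] : exists p, phi (e x y) p != 0.
  apply/existsP; apply: contraT => /existsPn phi_exy0.
  have : phi (e x y) = phi 0.
    by rewrite phi0; apply/ffunP => q; rewrite ffunE; apply/eqP/negPn/phi_exy0.
  by move/(phi_inj exy_I in_I0)/ffunP/(_ (x, y))/eqP; rewrite !ffunE eqxx oner_eq0.
have phi_exy : phi (e x y) = iscale (phi (e x y) p) (e p.1 p.2).
  apply/ffunP => q; rewrite !ffunE -surjective_pairing.
  have [-> | qp] := eqVneq q p; first by rewrite mulr1.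
  have [-> | q_supp] := eqVneq (phi (e x y) q) 0; first by rewrite /= mulr0.
  by rewrite (phi_ebas_support xy p_supp q_supp) eqxx in qp.
have p_lt := phi_ebas_supp_lt xy p_supp.
have theta_p : theta phi x y = p.
  rewrite /theta; case: pickP => [p' /and3P[_ /(phi_ebas_support xy p_supp) //] | none].
  by have := none p; rewrite p_lt p_supp -phi_exy eqxx.
by rewrite /sigma theta_p; split.
Qed.

Lemma phi_lie_ebas_chain x y z : (x < y)%O -> (y < z)%O ->
  iscale (sigma phi x z) (e (theta phi x z).1 (theta phi x z).2) =
  iscale (sigma phi x y * sigma phi y z)
    (lie (e (theta phi x y).1 (theta phi x y).2) (e (theta phi y z).1 (theta phi y z).2)).
Proof.
move=> xy yz; rewrite -lie_scale.
have [_ _ <-] := phi_ebas_theta xy; have [_ _ <-] := phi_ebas_theta yz.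
have [_ _ <-] := phi_ebas_theta (lt_trans xy yz).
by rewrite -phi_lie ?in_I_ebas ?ltW // lie_ebas_chain.
Qed.

End ElementaryLieAutomorphism.

End IncidenceAlgebra.

Theorem lemma5p2 (K : fieldType) (d : Order.disp_t) (X : finPOrderType d)
  (phi : {ffun X * X -> K} -> {ffun X * X -> K}) (x y z : X) :
  connected_poset X -> elementary phi -> (x < y)%O -> (y < z)%O ->
  (ebas K (theta phi x z).1 (theta phi x z).2 =
     imul (ebas K (theta phi x y).1 (theta phi x y).2)
          (ebas K (theta phi y z).1 (theta phi y z).2)
   /\ sigma phi x z = sigma phi x y * sigma phi y z)
  \/
  (ebas K (theta phi x z).1 (theta phi x z).2 =
     imul (ebas K (theta phi y z).1 (theta phi y z).2)
          (ebas K (theta phi x y).1 (theta phi x y).2)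
   /\ sigma phi x z = - (sigma phi x y * sigma phi y z)).
Proof.
move=> _ phi_elem xy yz; have := phi_lie_ebas_chain phi_elem xy yz.
have [+ _ _] := phi_ebas_theta phi_elem xy; have [+ _ _] := phi_ebas_theta phi_elem yz.
have [_ + _] := phi_ebas_theta phi_elem (lt_trans xy yz).
case: (theta phi x y) (theta phi y z) (theta phi x z) => a b [c d'] [u v] /= s_neq0 cd ab.
rewrite lie_ebas ?ltW //; have [bc | nbc] := eqVneq b c.
  subst c; rewrite (gt_eqF (lt_trans ab cd)) subr0 => /(iscale_ebas_inj s_neq0) [[-> ->] ->].
  by left; rewrite imul_ebas ?ltW // eqxx.
have [da | nda] := eqVneq d' a; last first.
  by rewrite subrr iscaler0 => /eqP; rewrite iscale_ebas_eq0 (negbTE s_neq0).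
subst d'; rewrite sub0r iscaleN => /(iscale_ebas_inj s_neq0) [[-> ->] ->].
by right; rewrite imul_ebas ?ltW // eqxx.
Qed.
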